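(* For tasks $m=1,\ldots,T$, let $L(w_{m0},\bm{w}_m)$ be a differentiable loss (the negative log-likelihood of a generalized linear model with intercept $w_{m0}\in\mathbb{R}$ and coefficient vector $\bm{w}_m\in\mathbb{R}^p$ fitted to data of size $n_m$). Let $\mathcal{E}$ be a set of task pairs with weights $r_{m_1,m_2}\ge0$, let $\lambda_1>0$, $\lambda_2,\lambda_3\ge0$, $\gamma$ be fixed, and let $P(\cdot;\lambda,\gamma)$ be a (possibly non-convex) group penalty with associated group-thresholding function $\bm{\Theta}(\cdot;\lambda,\gamma)$; set $\bm{\psi}(\bm{o};\lambda,\gamma)=\bm{o}-\bm{\Theta}(\bm{o};\lambda,\gamma)$. Define $$L^{\mathrm{MR}}(\bm{w}_0,W,U,O)=\sum_{m=1}^T\frac{1}{n_m}L(w_{m0},\bm{w}_m)+\frac{\lambda_1}{2}\sum_{m=1}^T\|\bm{w}_m-\bm{u}_m-\bm{o}_m\|_2^2+\lambda_2\sum_{(m_1,m_2)\in\mathcal{E}}r_{m_1,m_2}\|\bm{u}_{m_1}-\bm{u}_{m_2}\|_2+\sum_{m=1}^T P(\bm{o}_m;\lambda_3,\gamma),$$ with $\bm w_0=(w_{10},\dots,w_{T0})^\top$, $W=(\bm{w}_1,\ldots,\bm{w}_T)^\top$, $U=(\bm{u}_1,\ldots,\bm{u}_T)^\top$, $O=(\bm{o}_1,\ldots,\bm{o}_T)^\top$. Suppose $(\widehat{\bm{w}}_0,\widehat W,\widehat U,\widehat O)$ is a convergence (fixed) point of the block coordinate descent scheme that cyclically minimizes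 $L^{\mathrm{MR}}$ over $(\bm{w}_0,W)$, then over $U$, then updates $O$; precisely, assume (i) for each $m$, $(\widehat w_{m0},\widehat{\bm{w}}_m)\in\arg\min_{w_{m0},\bm{w}_m}\{\frac1{n_m}L(w_{m0},\bm{w}_m)+\frac{\lambda_1}{2}\|\bm{w}_m-\widehat{\bm{u}}_m-\widehat{\bm{o}}_m\|_2^2\}$; (ii) $\widehat U\in\arg\min_U L^{\mathrm{MR}}(\widehat{\bm{w}}_0,\widehat W,U,\widehat O)$; (iii) $\widehat{\bm{o}}_m=\bm{\Theta}(\widehat{\bm{w}}_m-\widehat{\bm{u}}_m;\lambda_3/\lambda_1,\gamma)$ for each $m$. Then, writing $\bm{w}_m'=(w_{m0},\bm{w}_m^\top)^\top$, $$\nabla_{\bm{w}_m'}\Big(\frac{1}{n_m}L(w_{m0},\bm{w}_m)\Big)\Big|_{\bm{w}_m'=\widehat{\bm{w}}_m'}+\lambda_1\begin{pmatrix}0\\ \bm{\psi}(\widehat{\bm{w}}_m-\widehat{\bm{u}}_m;\lambda_3/\lambda_1,\gamma)\end{pmatrix}=\bm{0},\quad m=1,\ldots,T,$$ and $$\bm{0}\in-\lambda_1\Psi(\widehat W-\widehat U;\lambda_3/\lambda_1,\gamma)+\lambda_2\,\partial g(\widehat U),$$ where $g(U)=\sum_{(m_1,m_2)\in\mathcal{E}}r_{m_1,m_2}\|\bm{u}_{m_1}-\bm{u}_{m_2}\|_2$ as a function of $\mathrm{vec}(U)=(\bm{u}_1^\top,\ldots,\bm{u}_T^\top)^\top$,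 $\partial g$ is its convex subdifferential, and $\Psi(\widehat W-\widehat U;\lambda,\gamma)=(\bm{\psi}(\widehat{\bm{w}}_1-\widehat{\bm{u}}_1;\lambda,\gamma)^\top,\ldots,\bm{\psi}(\widehat{\bm{w}}_T-\widehat{\bm{u}}_T;\lambda,\gamma)^\top)^\top$.
   Context: The group-thresholding function associated with the penalty $P$ is the map $\bm{\Theta}(\bm{z};\lambda,\gamma)$ giving the minimizer of $\tfrac12\|\bm{z}-\bm{o}\|_2^2+P(\bm{o};\lambda,\gamma)$ over $\bm{o}\in\mathbb{R}^p$ (e.g. for group lasso $\bm\Theta(\bm z;\lambda)=\max(0,1-\lambda/\|\bm z\|_2)\bm z$). The function $g$ equals $\|D\,\mathrm{vec}(U)\|_{2,1}$ with $D=A_r\otimes I_p$, $A_r$ the $|\mathcal{E}|\times T$ matrix whose row for $(m_1,m_2)$ is $r_{m_1,m_2}$ times the vector with $+1$ at $m_1$, $-1$ at $m_2$, zeros elsewhere, and $\|\cdot\|_{2,1}$ the sum of Euclidean norms of consecutive length-$p$ blocks. *)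

From HB Require Import structures.
From mathcomp Require Import all_boot all_order all_algebra.
From mathcomp Require Import all_classical all_reals all_analysis.
Set Implicit Arguments.
Unset Strict Implicit.
Unset Printing Implicit Defensive.
Import Order.TTheory GRing.Theory Num.Theory.
Import numFieldNormedType.Exports.
Local Open Scope ring_scope.

Section MTL.
Variable R : realType.

Definition dotv (k : nat) (u v : 'rV[R]_k) : R := \sum_(i < k) u 0 i * v 0 i.
Definition norm2 (k : nat) (v : 'rV[R]_k) : R := Num.sqrt (dotv v v).

Definition subdiff (k : nat) (f : 'rV[R]_k -> R) (x : 'rV[R]_k) : set 'rV[R]_k :=
  [set v | forall y, f x + dotv v (y - x) <= f y].

Definition psi (p : nat) (Theta : 'rV[R]_p -> R -> R -> 'rV[R]_p)
  (o : 'rV[R]_p) (lam gam : R) : 'rV[R]_p := o - Theta o lam gam.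

Definition Psi (T p : nat) (Theta : 'rV[R]_p -> R -> R -> 'rV[R]_p)
  (W U : 'M[R]_(T, p)) (lam gam : R) : 'rV[R]_(T * p) :=
  mxvec (\matrix_(m < T) psi Theta (row m W - row m U) lam gam).

Definition gfus (T p : nat) (E : {set 'I_T * 'I_T}) (r : 'I_T -> 'I_T -> R)
  (U : 'M[R]_(T, p)) : R :=
  \sum_(e in E) r e.1 e.2 * norm2 (row e.1 U - row e.2 U).

(* g as a function of vec(U) = (u_1^T, ..., u_T^T)^T *)
Definition gvec (T p : nat) (E : {set 'I_T * 'I_T}) (r : 'I_T -> 'I_T -> R)
  (x : 'rV[R]_(T * p)) : R := gfus E r (vec_mx x : 'M[R]_(T, p)).

Definition LMR (T p : nat) (L : 'I_T -> R * 'rV[R]_p -> R) (n : 'I_T -> nat)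
  (E : {set 'I_T * 'I_T}) (r : 'I_T -> 'I_T -> R)
  (P : 'rV[R]_p -> R -> R -> R) (lam1 lam2 lam3 gam : R)
  (w0 : 'I_T -> R) (W U O : 'M[R]_(T, p)) : R :=
  \sum_(m < T) (n m)%:R^-1 * L m (w0 m, row m W)
  + lam1 / 2 * \sum_(m < T) norm2 (row m W - row m U - row m O) ^+ 2
  + lam2 * gfus E r U
  + \sum_(m < T) P (row m O) lam3 gam.

End MTL.

(* (i) is Fermat's rule along lines: on each line through the block
   minimizer, the loss plus the quadratic coupling has zero derivative at the
   minimizer, and by (iii) [w_m - u_m - o_m] is exactly [psi (w_m - u_m)].
   (ii) says that [u = vec U] minimizes [lam1/2 |z - .|^2 + lam2 g] with
   [z = vec (W - O)] and [g] convex; comparing [u] with [u + t (y - u)] for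
   small [t] gives [lam1 <z - u, y - u> <= lam2 (g y - g u)].  For [lam2 > 0]
   this says that [(lam1/lam2) (z - u)] is a subgradient of [g] at [u]; for
   [lam2 = 0] it forces [z = u], and any subgradient of [g] will do, one being
   assembled edge by edge from the gradients of the Euclidean norm. *)

From HB Require Import structures.
From mathcomp Require Import all_boot all_order all_algebra.
From mathcomp Require Import all_classical all_reals all_analysis.
From mathcomp Require Import ring lra.
Import Order.TTheory GRing.Theory Num.Theory.
Import numFieldNormedType.Exports.
Local Open Scope ring_scope.
Set Implicit Arguments. Unset Strict Implicit.

Section EuclideanGeometry.
Variables (R : realType) (k : nat).
Implicit Types (a : R) (u v w : 'rV[R]_k).

Lemma dotvC u v : dotv u v = dotv v u.
Proof. by apply: eq_bigr => i _; rewrite mulrC. Qed.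

Lemma dotvDl u v w : dotv (u + v) w = dotv u w + dotv v w.
Proof. by rewrite /dotv -big_split; apply: eq_bigr => i _; rewrite mxE mulrDl. Qed.

Lemma dotvZl a u w : dotv (a *: u) w = a * dotv u w.
Proof. by rewrite /dotv mulr_sumr; apply: eq_bigr => i _; rewrite mxE mulrA. Qed.

Lemma dotvBl u v w : dotv (u - v) w = dotv u w - dotv v w.
Proof. by rewrite dotvDl -scaleN1r dotvZl mulN1r. Qed.

Lemma dotvDr u v w : dotv w (u + v) = dotv w u + dotv w v.
Proof. by rewrite dotvC dotvDl !(dotvC w). Qed.

Lemma dotvZr a u w : dotv w (a *: u) = a * dotv w u.
Proof. by rewrite dotvC dotvZl dotvC. Qed.

Lemma dotvBr u v w : dotv w (u - v) = dotv w u - dotv w v.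
Proof. by rewrite dotvC dotvBl !(dotvC w). Qed.

Lemma dotv0l w : dotv 0 w = 0.
Proof. by rewrite -(scale0r 0) dotvZl mul0r. Qed.

Lemma dotvv_ge0 u : 0 <= dotv u u.
Proof. by apply: sumr_ge0 => i _; rewrite -expr2 sqr_ge0. Qed.

Lemma dotvv_eq0 u : (dotv u u == 0) = (u == 0).
Proof.
apply/idP/eqP => [|->]; last by rewrite dotv0l.
rewrite psumr_eq0 => [/allP u0|i _]; last by rewrite -expr2 sqr_ge0.
apply/rowP => i; have := u0 i (mem_index_enum i).
by rewrite -expr2 sqrf_eq0 mxE => /eqP.
Qed.

Lemma norm2_ge0 u : 0 <= norm2 u.
Proof. exact: sqrtr_ge0. Qed.

Lemma sqr_norm2 u : norm2 u ^+ 2 = dotv u u.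
Proof. by rewrite sqr_sqrtr // dotvv_ge0. Qed.

Lemma norm2Z a u : norm2 (a *: u) = `|a| * norm2 u.
Proof. by rewrite /norm2 dotvZl dotvZr mulrA -expr2 sqrtrM ?sqr_ge0 // sqrtr_sqr. Qed.

Lemma sqr_norm2_sub_scale u v a :
  norm2 (u - a *: v) ^+ 2 = dotv u u - 2 * a * dotv u v + a ^+ 2 * dotv v v.
Proof. by rewrite sqr_norm2 !(dotvBl, dotvBr, dotvZl, dotvZr) (dotvC v u); ring. Qed.

Lemma dotv_le_norm2 u v : dotv u v <= norm2 u * norm2 v.
Proof.
have [/eqP v0 | v0] := eqVneq (dotv v v) 0.
  by rewrite dotvv_eq0 in v0; rewrite (eqP v0) dotvC dotv0l mulr_ge0 ?norm2_ge0.
have vv_gt0 : 0 < dotv v v by rewrite lt_def v0 dotvv_ge0.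
(* expanding [dotv w w >= 0] for [w := <v,v> u - <u,v> v] *)
have := dotvv_ge0 (dotv v v *: u - dotv u v *: v).
rewrite !(dotvBl, dotvBr, dotvZl, dotvZr) (dotvC v u).
have -> : dotv v v * (dotv v v * dotv u u - dotv u v * dotv u v) -
    dotv u v * (dotv v v * dotv u v - dotv u v * dotv v v) =
    dotv v v * (dotv u u * dotv v v - dotv u v ^+ 2) by ring.
rewrite pmulr_rge0 // subr_ge0 -!sqr_norm2 -exprMn -(real_normK (num_real _)) => uv_sqr.
apply: le_trans (ler_norm _) _.
by rewrite -(ler_pXn2r (_ : 0 < 2)%N) ?nnegrE ?mulr_ge0 ?norm2_ge0.
Qed.

Lemma norm2D_le u v : norm2 (u + v) <= norm2 u + norm2 v.
Proof.
rewrite -(ler_pXn2r (_ : 0 < 2)%N) ?nnegrE ?addr_ge0 ?norm2_ge0 //.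
rewrite sqr_norm2 !(dotvDl, dotvDr) (dotvC v u) sqrrD -!sqr_norm2.
have := dotv_le_norm2 u v; lra.
Qed.

Lemma norm2_subgradient u v :
  norm2 u + dotv ((norm2 u)^-1 *: u) (v - u) <= norm2 v.
Proof.
have [->|u0] := eqVneq (norm2 u) 0; first by rewrite invr0 scale0r dotv0l addr0 norm2_ge0.
rewrite dotvBr !dotvZl -sqr_norm2 expr2 mulrA mulVf // mul1r.
have : (norm2 u)^-1 * dotv u v <= norm2 v.
  by rewrite mulrC ler_pdivrMr ?lt_def ?u0 ?norm2_ge0 // mulrC dotv_le_norm2.
lra.
Qed.

Definition convexv (g : 'rV[R]_k -> R) :=
  forall u v (t : R), 0 <= t <= 1 -> g (u + t *: (v - u)) <= (1 - t) * g u + t * g v.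

End EuclideanGeometry.

Lemma ler_of_forall_le_addM01 (R : realFieldType) (a b c : R) :
  0 <= b -> (forall t, 0 < t <= 1 -> a <= c + t * b) -> a <= c.
Proof.
move=> b_ge0 Hab; rewrite leNgt; apply/negP => lt_ca.
pose t := (a - c) / (b + (a - c)).
have den_gt0 : 0 < b + (a - c) by lra.
have t_gt0 : 0 < t by rewrite divr_gt0 // subr_gt0.
have t_le1 : t <= 1 by rewrite ler_pdivrMr // mul1r; lra.
have tb_lt : t * b < a - c by rewrite mulrAC ltr_pdivrMr //; nra.
have := Hab t; rewrite t_gt0 t_le1 => /(_ isT); lra.
Qed.

Lemma prox_variational_ineq (R : realType) k (lam1 lam2 : R)
    (g : 'rV[R]_k -> R) (z u : 'rV[R]_k) :
  0 <= lam1 -> 0 <= lam2 -> convexv g ->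
  (forall y, lam1 / 2 * norm2 (z - u) ^+ 2 + lam2 * g u
             <= lam1 / 2 * norm2 (z - y) ^+ 2 + lam2 * g y) ->
  forall y, lam1 * dotv (z - u) (y - u) <= lam2 * (g y - g u).
Proof.
move=> lam1_ge0 lam2_ge0 g_cvx u_min y.
apply: (@ler_of_forall_le_addM01 _ _ (lam1 / 2 * dotv (y - u) (y - u))).
  by rewrite mulr_ge0 ?divr_ge0 ?dotvv_ge0.
move=> t /andP[t_gt0 t_le1].
have := u_min (u + t *: (y - u)).
have -> : z - (u + t *: (y - u)) = (z - u) - t *: (y - u) by rewrite opprD addrA.
rewrite !sqr_norm2_sub_scale sqr_norm2.
have := ler_wpM2l lam2_ge0 (g_cvx u y t _); rewrite ltW //= t_le1 => /(_ isT).
nra.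
Qed.

Lemma subdiff_nneg_sum (R : realType) k (I : finType) (A : {pred I})
    (c : I -> R) (f : I -> 'rV[R]_k -> R) (v : I -> 'rV[R]_k) x :
  (forall i, i \in A -> 0 <= c i) ->
  (forall i, i \in A -> v i \in subdiff (f i) x) ->
  \sum_(i in A) c i *: v i \in subdiff (fun y => \sum_(i in A) c i * f i y) x.
Proof.
move=> c_ge0 v_sub; rewrite inE => y /=.
rewrite (big_morph (fun w => dotv w (y - x)) (fun u v => dotvDl u v (y - x)) (dotv0l _)).
rewrite -big_split /=; apply: ler_sum => i Ai.
rewrite dotvZl -mulrDr ler_wpM2l ?c_ge0 //.
by have := v_sub i Ai; rewrite inE; apply.
Qed.

Section Vectorization.
Variables (R : realType) (T p : nat).
Implicit Types (A B U : 'M[R]_(T, p)) (x y : 'rV[R]_(T * p)).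

Lemma dotv_mxvec A B : dotv (mxvec A) (mxvec B) = \sum_m dotv (row m A) (row m B).
Proof.
rewrite /dotv (reindex (uncurry (@mxvec_index T p))) /=; last exact: curry_mxvec_bij.
rewrite pair_big_dep /=.
by apply: eq_bigr => -[i j] _; rewrite /= !mxvecE !mxE.
Qed.

Lemma sqr_norm2_mxvec A : norm2 (mxvec A) ^+ 2 = \sum_m norm2 (row m A) ^+ 2.
Proof. by rewrite sqr_norm2 dotv_mxvec; apply: eq_bigr => m _; rewrite sqr_norm2. Qed.

Lemma sum_indicator_mul (I : finType) (a : I) (F : I -> R) :
  \sum_i (i == a)%:R * F i = F a.
Proof. by rewrite (bigD1 a) //= eqxx mul1r big1 ?addr0 // => i /negbTE ->; rewrite mul0r. Qed.

(* [pair_mx i j s] is the adjoint of [U |-> row i U - row j U] applied to [s]. *)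
Definition pair_mx (i j : 'I_T) (s : 'rV[R]_p) : 'M[R]_(T, p) :=
  \matrix_(m, l) (((m == i)%:R - (m == j)%:R) * s 0 l).

Lemma dotv_pair_mx i j s B :
  \sum_m dotv (row m (pair_mx i j s)) (row m B) = dotv s (row i B - row j B).
Proof.
have row_pair m : row m (pair_mx i j s) = ((m == i)%:R - (m == j)%:R) *: s.
  by apply/rowP => l; rewrite !mxE.
under eq_bigr => m _ do rewrite row_pair dotvZl mulrBl.
by rewrite sumrB !sum_indicator_mul dotvBr.
Qed.

Lemma subdiff_norm2_pair i j x (d := row i (vec_mx x) - row j (vec_mx x)) :
  mxvec (pair_mx i j ((norm2 d)^-1 *: d))
    \in subdiff (fun y => norm2 (row i (vec_mx y) - row j (vec_mx y))) x.
Proof.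
rewrite inE => y /=.
rewrite -[y - x]vec_mxK dotv_mxvec dotv_pair_mx.
have -> : row i (vec_mx (y - x)) - row j (vec_mx (y - x))
          = (row i (vec_mx y) - row j (vec_mx y)) - d.
  by apply/rowP => l; rewrite /d !linearB /= !mxE; ring.
exact: norm2_subgradient.
Qed.

Variables (E : {set 'I_T * 'I_T}) (r : 'I_T -> 'I_T -> R).
Hypothesis r_ge0 : forall e, e \in E -> 0 <= r e.1 e.2.

Lemma gvec_convex : convexv (gvec (p := p) E r).
Proof.
move=> x y t /andP[t_ge0 t_le1]; rewrite /gvec /gfus !mulr_sumr -big_split /=.
apply: ler_sum => e Ee.
have -> : row e.1 (vec_mx (x + t *: (y - x))) - row e.2 (vec_mx (x + t *: (y - x)))
    = (1 - t) *: (row e.1 (vec_mx x) - row e.2 (vec_mx x))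
      + t *: (row e.1 (vec_mx y) - row e.2 (vec_mx y)).
  by apply/rowP => l; rewrite !(linearD, linearZ, linearB) /= !mxE; ring.
apply: le_trans (ler_wpM2l (r_ge0 Ee) (norm2D_le _ _)) _.
by rewrite !norm2Z !ger0_norm ?subr_ge0 // mulrDr !mulrA ![r _ _ * _]mulrC.
Qed.

Lemma exists_subdiff_gvec x : exists v, v \in subdiff (gvec (p := p) E r) x.
Proof.
eexists; apply: (subdiff_nneg_sum (c := fun e => r e.1 e.2)) => // e _.
exact: subdiff_norm2_pair.
Qed.

End Vectorization.

Section FermatAlongLine.
Variables (R : realType) (V : normedModType R) (f : V -> R).
Hypothesis f_diff : forall y, differentiable f y.

Lemma derivable_along_line (x h : V) t : derivable (fun s : R => f (s *: h + x)) t 1.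
Proof. by apply/derivable1_diffP; apply: differentiable_comp. Qed.

Lemma derive_along_line0 (x h : V) : 'D_1 (fun s : R => f (s *: h + x)) 0 = 'd f x h.
Proof.
rewrite -deriveE // /derive; do 2 f_equal; apply: funext => s /=.
by rewrite scale0r add0r addr0 [s%:A]mulr1.
Qed.

Lemma is_derive_quadratic0 (c M : R) :
  is_derive (0 : R) (1 : R) (fun t : R => c * t + M * t ^+ 2) c.
Proof. by apply: is_derive_eq; rewrite !scale0r addr0 scaler0 addr0 [c%:A]mulr1. Qed.

Lemma derivable_quadratic (c M t : R) : derivable (fun t : R => c * t + M * t ^+ 2) t 1.
Proof.
apply: (@ex_derive _ _ _ _ _ _ (c + M * (2 * t))); apply: is_derive_eq.
by rewrite [c%:A]mulr1 [t%:A]mulr1 /GRing.scale /= mulr2n mulrDl mul1r.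
Qed.

Lemma diff_eq0_at_min_along_line (x h : V) (c M : R) :
  (forall t, f x <= f (t *: h + x) + (c * t + M * t ^+ 2)) -> 'd f x h + c = 0.
Proof.
move=> x_min.
pose line s := f (s *: h + x); pose quad (t : R) := c * t + M * t ^+ 2.
have der t : derivable (line + quad) t 1.
  by apply: derivableD; [exact: derivable_along_line | exact: derivable_quadratic].
have min0 t : t \in `]-1, 1[ -> (line + quad) 0 <= (line + quad) t.
  move=> _; have addE s : (line + quad) s = line s + quad s by [].
  rewrite !addE /line /quad scale0r add0r mulr0 expr0n /= mulr0 !addr0.
  exact: x_min.
have zero_in : (0 : R) \in `]-1, 1[ by rewrite in_itv /= ltrN10 ltr01.
have le_N11 : (-1 : R) <= 1 by rewrite (le_trans (lerN10 R)).
have [_ <-] := derive1_at_min le_N11 (fun t _ => der t) zero_in min0.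
rewrite deriveD ?derive_along_line0; [|exact: derivable_along_line|exact: derivable_quadratic].
by case: (is_derive_quadratic0 c M) => _ ->.
Qed.

End FermatAlongLine.

Lemma loss_block_stationary (R : realType) p (F : R * 'rV[R]_p -> R)
    (lam1 : R) (x0 : R * 'rV[R]_p) (u o : 'rV[R]_p) :
  (forall x, differentiable F x) ->
  (forall (a : R) (w : 'rV[R]_p),
     F x0 + lam1 / 2 * norm2 (x0.2 - u - o) ^+ 2
     <= F (a, w) + lam1 / 2 * norm2 (w - u - o) ^+ 2) ->
  forall h, 'd F x0 h + lam1 * dotv (x0.2 - u - o) h.2 = 0.
Proof.
move=> F_diff x0_min h; set d := x0.2 - u - o.
apply: (diff_eq0_at_min_along_line F_diff (M := lam1 / 2 * dotv h.2 h.2)) => t.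
have := x0_min (t *: h + x0).1 (t *: h + x0).2; rewrite -surjective_pairing.
have -> : (t *: h + x0).2 - u - o = d - (- t) *: h.2.
  by apply/rowP => l; rewrite !mxE /=; ring.
rewrite sqr_norm2_sub_scale sqr_norm2.
have -> : lam1 / 2 * (dotv d d - 2 * - t * dotv d h.2 + (- t) ^+ 2 * dotv h.2 h.2)
    = lam1 / 2 * dotv d d + (lam1 * dotv d h.2 * t + lam1 / 2 * dotv h.2 h.2 * t ^+ 2).
  by field.
lra.
Qed.

Lemma fusion_block_stationary (R : realType) T p (L : 'I_T -> R * 'rV[R]_p -> R)
    (n : 'I_T -> nat) (E : {set 'I_T * 'I_T}) (r : 'I_T -> 'I_T -> R)
    (P : 'rV[R]_p -> R -> R -> R) (lam1 lam2 lam3 gam : R)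
    (w0 : 'I_T -> R) (W Uh O : 'M[R]_(T, p)) :
  (forall e, e \in E -> 0 <= r e.1 e.2) -> 0 < lam1 -> 0 <= lam2 ->
  (forall U, LMR L n E r P lam1 lam2 lam3 gam w0 W Uh O
             <= LMR L n E r P lam1 lam2 lam3 gam w0 W U O) ->
  exists2 v, v \in subdiff (gvec (p := p) E r) (mxvec Uh)
    & - lam1 *: mxvec (W - O - Uh) + lam2 *: v = 0.
Proof.
move=> r_ge0 lam1_gt0 lam2_ge0 Uh_min.
set z := mxvec (W - O); set u := mxvec Uh.
have fit_sum U : \sum_(m < T) norm2 (row m W - row m U - row m O) ^+ 2
                 = norm2 (z - mxvec U) ^+ 2.
  rewrite -linearB sqr_norm2_mxvec; apply: eq_bigr => m _.
  by congr (norm2 _ ^+ 2); apply/rowP => l; rewrite !mxE; ring.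
have u_min y : lam1 / 2 * norm2 (z - u) ^+ 2 + lam2 * gvec E r u
               <= lam1 / 2 * norm2 (z - y) ^+ 2 + lam2 * gvec E r y.
  have := Uh_min (vec_mx y); rewrite /LMR !fit_sum /gvec vec_mxK mxvecK; lra.
have vi := prox_variational_ineq (ltW lam1_gt0) lam2_ge0 (gvec_convex r_ge0) u_min.
have zu : mxvec (W - O - Uh) = z - u by rewrite linearB.
have [lam2_0 | lam2_neq0] := eqVneq lam2 0.
  have [v v_sub] := exists_subdiff_gvec r_ge0 u.
  exists v => //; rewrite lam2_0 scale0r addr0 zu.
  have := vi z; rewrite lam2_0 mul0r pmulr_rle0 // => zu_le0.
  suff /eqP -> : z - u == 0 by rewrite scaler0.
  by rewrite -dotvv_eq0 eq_le zu_le0 dotvv_ge0.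
have lam2_gt0 : 0 < lam2 by rewrite lt_def lam2_neq0.
exists ((lam1 / lam2) *: (z - u)); last first.
  by rewrite zu scalerA mulrCA mulfV // mulr1 scaleNr addNr.
rewrite inE => y /=; rewrite dotvZl.
have : lam1 / lam2 * dotv (z - u) (y - u) <= gvec E r y - gvec E r u.
  by rewrite mulrAC ler_pdivrMr // [_ * lam2]mulrC vi.
lra.
Qed.

Theorem proposition2 (R : realType) (T p : nat)
  (L : 'I_T -> R * 'rV[R]_p -> R) (n : 'I_T -> nat)
  (E : {set 'I_T * 'I_T}) (r : 'I_T -> 'I_T -> R)
  (P : 'rV[R]_p -> R -> R -> R) (Theta : 'rV[R]_p -> R -> R -> 'rV[R]_p)
  (lam1 lam2 lam3 gam : R)
  (w0h : 'I_T -> R) (Wh Uh Oh : 'M[R]_(T, p))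
  (Hn : forall m, (0 < n m)%N)
  (HLdiff : forall m (x : R * 'rV[R]_p), differentiable (L m) x)
  (Hr : forall e, e \in E -> 0 <= r e.1 e.2)
  (Hlam1 : 0 < lam1) (Hlam2 : 0 <= lam2) (Hlam3 : 0 <= lam3)
  (HTheta : forall z o : 'rV[R]_p,
     1 / 2 * norm2 (z - Theta z (lam3 / lam1) gam) ^+ 2
       + P (Theta z (lam3 / lam1) gam) (lam3 / lam1) gam
     <= 1 / 2 * norm2 (z - o) ^+ 2 + P o (lam3 / lam1) gam)
  (Hi : forall m (a : R) (w : 'rV[R]_p),
     (n m)%:R^-1 * L m (w0h m, row m Wh)
       + lam1 / 2 * norm2 (row m Wh - row m Uh - row m Oh) ^+ 2
     <= (n m)%:R^-1 * L m (a, w)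
       + lam1 / 2 * norm2 (w - row m Uh - row m Oh) ^+ 2)
  (Hii : forall U : 'M[R]_(T, p),
     LMR L n E r P lam1 lam2 lam3 gam w0h Wh Uh Oh
     <= LMR L n E r P lam1 lam2 lam3 gam w0h Wh U Oh)
  (Hiii : forall m, row m Oh = Theta (row m Wh - row m Uh) (lam3 / lam1) gam) :
  (forall m (h : R * 'rV[R]_p),
     'd (fun x : R * 'rV[R]_p => (n m)%:R^-1 * L m x) (w0h m, row m Wh) h
     + lam1 * (0 * h.1 + dotv (psi Theta (row m Wh - row m Uh) (lam3 / lam1) gam) h.2)
     = 0)
  /\
  (exists v : 'rV[R]_(T * p),
     v \in subdiff (gvec (p := p) E r) (mxvec Uh) /\
     - lam1 *: Psi Theta Wh Uh (lam3 / lam1) gam + lam2 *: v = 0).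
Proof.
split=> [m h|].
  rewrite /psi -Hiii mul0r add0r.
  apply: (loss_block_stationary (x0 := (w0h m, row m Wh))) => [x|]; last exact: Hi.
  exact: differentiableM.
have -> : Psi Theta Wh Uh (lam3 / lam1) gam = mxvec (Wh - Oh - Uh).
  by congr mxvec; apply/matrixP => i j; rewrite !mxE /psi -Hiii !mxE; ring.
have [v v_sub v_eq] := fusion_block_stationary Hr Hlam1 Hlam2 Hii.
by exists v.
Qed.
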